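(* If $\frac12<p\le t\le\frac23$, then bold play is not optimal, i.e. $\pi(p,t)>p$.
   Context: Let $\beta_1,\beta_2,\ldots$ be independent Bernoulli random variables with success probability $p$. A stake sequence is a sequence $\gamma=(c_1,c_2,\ldots)$ of non-negative reals with $c_1\ge c_2\ge\cdots$ and $\sum_i c_i=1$; write $S_\gamma=\sum_i c_i\beta_i$. For $0\le p\le t\le 1$ define $\pi(p,t)=\sup\{\mathbf P(S_\gamma\ge t)\mid \gamma \text{ a stake sequence}\}$. Bold play for threshold $t$ is the stake sequence with $c_i=\frac1m$ for $i\le m$ and $c_i=0$ for $i>m$, where $m=\lfloor 1/t\rfloor$; it is optimal if it attains $\pi(p,t)$. For $t>\frac12$ bold play is $c_1=1$, with success probability $p$. *)

From HB Require Import structures.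
From mathcomp Require Import all_boot all_order all_algebra.
From mathcomp Require Import all_classical all_reals all_analysis.
Set Implicit Arguments. Unset Strict Implicit. Unset Printing Implicit Defensive.
Import Order.TTheory GRing.Theory Num.Theory.
Import numFieldNormedType.Exports.
Local Open Scope classical_set_scope.
Local Open Scope ring_scope.

Definition mutually_independent {d} {T : measurableType d} {R : realType}
  (P : probability T R) (X : nat -> T -> R) : Prop :=
  forall (s : seq nat) (B : nat -> set R), uniq s ->
    (forall i, measurable (B i)) ->
    P (\big[setI/setT]_(i <- s) (X i @^-1` B i)) =
    (\prod_(i <- s) P (X i @^-1` B i))%E.

(* beta_1, beta_2, ... (indexed from 0 here) are independent Bernoulli(p)
   random variables on the probability space P. *)
Definition iid_bernoulli {d} {T : measurableType d} {R : realType}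
  (P : probability T R) (p : R) (beta : nat -> T -> R) : Prop :=
  [/\ forall i, measurable_fun setT (beta i),
      forall i x, beta i x = 0 \/ beta i x = 1,
      forall i, P (beta i @^-1` [set 1]) = p%:E
    & mutually_independent P beta].

Definition stake_seq {R : realType} (c : nat -> R) : Prop :=
  [/\ forall i, 0 <= c i,
      forall i, c i.+1 <= c i
    & series c @ \oo --> (1 : R)].

Definition S_gamma {T : Type} {R : realType} (c : nat -> R) (beta : nat -> T -> R)
  (x : T) : \bar R :=
  (\sum_(0 <= i <oo) (c i * beta i x)%:E)%E.

Definition pi_opt {d} {T : measurableType d} {R : realType}
  (P : probability T R) (beta : nat -> T -> R) (t : R) : \bar R :=
  ereal_sup [set P [set x | (t%:E <= S_gamma c beta x)%E] | c in @stake_seq R].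

From mathcomp Require Import all_boot all_order all_algebra.
From mathcomp Require Import all_classical all_reals all_analysis.
From mathcomp Require Import ring lra.
Import Order.TTheory GRing.Theory Num.Theory.
Local Open Scope ring_scope.
Local Open Scope classical_set_scope.

(* Staking 1/3 on each of the first three trials reaches any threshold
   t in (1/2, 2/3] exactly when at least two of them succeed, which happens
   with probability p^3 + 3 p^2 (1 - p) = p + p (2p - 1) (1 - p) > p. *)

Definition equal_stakes (R : realType) (m : nat) : nat -> R :=
  fun i => if (i < m)%N then m%:R^-1 else 0.

Section EqualStakes.
Variable R : realType.

Lemma equal_stakes_ge0 m i : 0 <= equal_stakes R m i.
Proof. by rewrite /equal_stakes; case: ifP => // _; rewrite invr_ge0. Qed.

Lemma equal_stakes_stake_seq m : (0 < m)%N -> stake_seq (equal_stakes R m).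
Proof.
move=> m_gt0; split=> [i|i|]; first exact: equal_stakes_ge0.
  rewrite {1}/equal_stakes; case: ifP => [lt_Sim|_]; last exact: equal_stakes_ge0.
  by rewrite /equal_stakes (ltn_trans _ lt_Sim).
apply: (@cvg_near_cst _ R^o); near=> n.
have le_mn : (m <= n)%N by near: n; exists m.
rewrite /series /= (big_cat_nat (leq0n m) le_mn) /= [X in _ + X]big1_seq; last first.
  by move=> i /andP[_]; rewrite mem_index_iota /equal_stakes => /andP[/leq_gtF ->].
rewrite addr0 (eq_big_nat _ _ (F2 := fun=> m%:R^-1)); last first.
  by move=> i /andP[_ lt_im]; rewrite /equal_stakes lt_im.
by rewrite sumr_const_nat subn0 -[LHS]mulr_natr mulVf // pnatr_eq0 -lt0n.
Unshelve. all: by end_near.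
Qed.

Lemma S_gamma_equal_stakes (T : Type) m (beta : nat -> T -> R) x :
  (forall i, 0 <= beta i x) ->
  S_gamma (equal_stakes R m) beta x = ((\sum_(i < m) beta i x) / m%:R)%:E.
Proof.
move=> beta_ge0; rewrite /S_gamma (nneseries_split 0 m); last first.
  by move=> k _; rewrite lee_fin mulr_ge0 ?equal_stakes_ge0.
rewrite add0n eseries0 ?adde0; last first.
  by move=> i le_mi _; rewrite /equal_stakes ltnNge le_mi mul0r.
rewrite sumEFin big_mkord mulr_suml; congr EFin; apply: eq_bigr => i _.
by rewrite /equal_stakes ltn_ord mulrC.
Qed.

End EqualStakes.

Lemma pi_opt_ge {R : realType} {d : measure_display} {T : measurableType d}
  (P : probability T R) (beta : nat -> T -> R) (t : R) {c : nat -> R} :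
  stake_seq c -> (P [set x | (t%:E <= S_gamma c beta x)%E] <= pi_opt P beta t)%E.
Proof. by move=> c_stake; apply: ereal_sup_ubound; exists c. Qed.

Section Outcomes.
Context {R : realType} {T : Type}.
Variable beta : nat -> T -> R.

Definition outcome (b : nat -> bool) (s : seq nat) : set T :=
  \big[setI/setT]_(i <- s) (beta i @^-1` [set (b i)%:R]).

Definition outcome3 (b0 b1 b2 : bool) : set T :=
  outcome (nth false [:: b0; b1; b2]) (iota 0 3).

Lemma outcome3E b0 b1 b2 : outcome3 b0 b1 b2 =
  [set x | beta 0 x = b0%:R /\ beta 1 x = b1%:R /\ beta 2 x = b2%:R].
Proof.
rewrite /outcome3 /outcome !big_cons big_nil setIT.
by apply/seteqP; split=> x /= => [[? []]|[? []]].
Qed.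

Lemma outcome3_disjoint b0 b1 b2 b0' b1' b2' : (b0, b1, b2) != (b0', b1', b2') ->
  outcome3 b0 b1 b2 `&` outcome3 b0' b1' b2' = set0.
Proof.
move=> neq; apply/seteqP; split=> // x; rewrite !outcome3E /=.
move=> [[-> [-> ->]] [/eqP e0 [/eqP e1 /eqP e2]]]; move: neq e0 e1 e2.
by rewrite !eqr_nat; case: b0 b0' b1 b1' b2 b2' => [] [] [] [] [] [].
Qed.

Definition majority3 : set T := outcome3 true true true `|` outcome3 false true true
  `|` outcome3 true false true `|` outcome3 true true false.

End Outcomes.

Section BernoulliTrials.
Context {R : realType} {d : measure_display} {T : measurableType d}.
Context {P : probability T R} {p : R} {beta : nat -> T -> R}.
Hypothesis beta_iid : iid_bernoulli P p beta.

Let weight (b : bool) := if b then p else 1 - p.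

Lemma measurable_bernoulli_preimage i (A : set R) :
  measurable A -> measurable (beta i @^-1` A).
Proof.
by case: beta_iid => mbeta _ _ _ mA; rewrite -[_ @^-1` _]setTI; exact: mbeta.
Qed.

Lemma measurable_outcome b s : measurable (outcome beta b s).
Proof.
rewrite /outcome; elim: s => [|i s IHs]; first by rewrite big_nil.
by rewrite big_cons; apply: measurableI => //; exact/measurable_bernoulli_preimage.
Qed.

Lemma prob_bernoulli i (b : bool) : P (beta i @^-1` [set b%:R]) = (weight b)%:E.
Proof.
case: beta_iid => _ beta01 Pbeta1 _; case: b; first by rewrite Pbeta1.
have -> : beta i @^-1` [set false%:R] = ~` (beta i @^-1` [set 1]).
  by apply/seteqP; split=> x /=; case: (beta01 i x) => ->; lra.
by rewrite probability_setC ?Pbeta1 //; exact/measurable_bernoulli_preimage.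
Qed.

Lemma prob_outcome b s : uniq s ->
  P (outcome beta b s) = (\prod_(i <- s) weight (b i))%:E.
Proof.
case: beta_iid => _ _ _ beta_indep s_uniq.
rewrite /outcome beta_indep // -prodEFin.
by apply: eq_bigr => i _; exact: prob_bernoulli.
Qed.

Lemma prob_outcome3 b0 b1 b2 :
  P (outcome3 beta b0 b1 b2) = (weight b0 * weight b1 * weight b2)%:E.
Proof. by rewrite prob_outcome // !big_cons big_nil mulr1 mulrA. Qed.

Lemma prob_majority3 : P (majority3 beta) = (p ^+ 3 + 3 * p ^+ 2 * (1 - p))%:E.
Proof.
rewrite /majority3 !measureU ?setIUl ?outcome3_disjoint ?setU0 //.
all: try by do ?apply: measurableU; exact: measurable_outcome.
(* [P] and [measureU] reach the measure through different coercions, so the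
   probabilities are folded back rather than rewritten. *)
have -> : p ^+ 3 + 3 * p ^+ 2 * (1 - p) =
    weight true * weight true * weight true + weight false * weight true * weight true
    + weight true * weight false * weight true + weight true * weight true * weight false.
  by rewrite /weight; ring.
by rewrite !EFinD -!prob_outcome3.
Qed.

Lemma equal_stakes3_event (t : R) : 2^-1 < t -> t <= 2 / 3 ->
  [set x | (t%:E <= S_gamma (equal_stakes R 3) beta x)%E] = majority3 beta.
Proof.
case: beta_iid => _ beta01 _ _ t_gt t_le; rewrite /majority3 !outcome3E.
apply/seteqP; split=> x /=; rewrite S_gamma_equal_stakes ?lee_fin; last first.
  1,3: by move=> i; case: (beta01 i x) => ->.
all: rewrite !big_ord_recr big_ord0 /=.
all: case: (beta01 0 x) => ->; case: (beta01 1 x) => ->; case: (beta01 2 x) => ->.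
all: intuition lra.
Qed.

End BernoulliTrials.

Theorem corollary17 (R : realType) (d : measure_display) (T : measurableType d)
  (P : probability T R) (beta : nat -> T -> R) (p t : R) :
  iid_bernoulli P p beta ->
  2^-1 < p -> p <= t -> t <= 2 / 3 ->
  (p%:E < pi_opt P beta t)%E.
Proof.
move=> beta_iid p_gt p_le_t t_le.
apply: (lt_le_trans _ (pi_opt_ge P beta t (equal_stakes_stake_seq R 3 isT))).
rewrite (equal_stakes3_event beta_iid) //; last exact: lt_le_trans p_le_t.
rewrite (prob_majority3 beta_iid) lte_fin.
have gain : 0 < p * ((2 * p - 1) * (1 - p)).
  by apply: mulr_gt0; [|apply: mulr_gt0]; lra.
lra.
Qed.
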